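(* Let $\alpha$ be a countable ordinal. For all $e,k\in\mathbb N$, all tuples $\vec a$ of natural numbers and all $b\in\mathbb N$, the set $$\{\vec f\in(\mathbb N^{\mathbb N})^k : \|\langle e,\vec a,\vec f,b\rangle\|_{\Omega_{\mathbf S}}<\alpha\}$$ is a Suslin set (a subset of $(\mathbb N^{\mathbb N})^k$).
   Context: The Suslin functional: $\mathbf S(g)=0$ if $\forall f\in\mathbb N^{\mathbb N}\exists n\,g(\bar f(n))=0$, and $1$ if $\exists f\forall n\,g(\bar f(n))>0$, $\bar f(n)=\langle f(0),\dots,f(n-1)\rangle$. $\Omega_{\mathbf S}$ is the set of tuples $\langle e,\vec a,\vec f,b\rangle$ with $\{e\}(\mathbf S,\vec a,\vec f)=b$ in the sense of Kleene computability (schemes S1–S9, arguments ordered as: $\mathbf S$, integers, functions), and $\|\cdot\|_{\Omega_{\mathbf S}}$ is the ordinal rank of the (well-founded) computation tree of the tuple; for tuples not in $\Omega_{\mathbf S}$ the condition $\|\cdot\|<\alpha$ is false. Suslin sets in $X=(\mathbb N^{\mathbb N})^k$: a Suslin scheme is $s\mapsto P_s\subseteq X$ on the set $\mathrm{SEQ}$ of finite sequences of naturals, $\mathbf A(\mathbf P)=\bigcup_f\bigcap_n P_{\bar f(n)}$; $\Sigma_0$ clopen sets; $\Sigma_\beta$ ($\beta>0$) sets $\mathbf A(\mathbf P)$ with each $P_s\in\Pi_\gamma$, some $\gamma<\beta$; $\Pi_\beta$ complements; Suslin sets $=\bigcup_{\beta<\omega_1}\Sigma_\beta$. *)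

From mathcomp Require Import all_boot.
Set Implicit Arguments. Unset Strict Implicit. Unset Printing Implicit Defensive.

(* Countable ordinals as Brouwer trees.  Every Brouwer tree denotes a  *)
(* countable ordinal (OZ = 0, OS a = a+1, OL f = sup_n f n) and every  *)
(* countable ordinal is denoted by some tree.                           *)
Inductive Ord : Type :=
| OZ : Ord
| OS : Ord -> Ord
| OL : (nat -> Ord) -> Ord.

(* ole a b <-> |a| <= |b| ;  olt a b <-> |a| < |b| *)
Inductive ole : Ord -> Ord -> Prop :=
| oleZ b : ole OZ b
| oleS a b : olt a b -> ole (OS a) b
| oleL f b : (forall n, ole (f n) b) -> ole (OL f) b
with olt : Ord -> Ord -> Prop :=
| oltS a b : ole a b -> olt a (OS b)
| oltL a f n : olt a (f n) -> olt a (OL f).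

Definition osup2 (a b : Ord) : Ord := OL (fun n => if n is 0 then a else b).

(* Coding of finite sequences of naturals as naturals (injective).      *)
Definition pairn (x y : nat) : nat := 2 ^ x * (2 * y).+1.
Definition code (s : seq nat) : nat := foldr pairn 0 s.

Definition fbar (f : nat -> nat) (n : nat) : nat := code (mkseq f n).

(* The Suslin functional, as a (total, single-valued) relation S(g) = b. *)
Definition S_val (g : nat -> nat) (b : nat) : Prop :=
  (b = 0 /\ forall f : nat -> nat, exists n, g (fbar f n) = 0) \/
  (b = 1 /\ exists f : nat -> nat, forall n, 0 < g (fbar f n)).

Definition swap_seq (T : Type) (d : T) (s : seq T) (i j : nat) : seq T :=
  [seq nth d s (if l == i then j else if l == j then i else l) | l <- iota 0 (size s)].

Definition fn := nat -> nat.

(* Kleene computations {e}(S, a, f) = b relative to S (schemes S1-S9),  *)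
(* with the ordinal rank of the computation tree:                       *)
(* CompR e a f b r  <->  <e,a,f,b> \in Omega_S and its computation tree *)
(* has rank r  (rank of a node = sup over children c of (rank c + 1)).  *)
Inductive CompR : nat -> seq nat -> seq fn -> nat -> Ord -> Prop :=
| S1 x a f : CompR (code [:: 1; (size a).+1; size f]) (x :: a) f x.+1 OZ
| S2 q a f : CompR (code [:: 2; size a; size f; q]) a f q OZ
| S3 x a f : CompR (code [:: 3; (size a).+1; size f]) (x :: a) f x OZ
| S4 e1 e2 a f c b r1 r2 :
    CompR e2 a f c r2 -> CompR e1 (c :: a) f b r1 ->
    CompR (code [:: 4; size a; size f; e1; e2]) a f b (osup2 (OS r1) (OS r2))
| S5z e1 e2 a f b r1 :
    CompR e1 a f b r1 ->
    CompR (code [:: 5; (size a).+1; size f; e1; e2]) (0 :: a) f b (OS r1)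
| S5s e1 e2 m a f c b r1 r2 :
    CompR (code [:: 5; (size a).+1; size f; e1; e2]) (m :: a) f c r1 ->
    CompR e2 (c :: m :: a) f b r2 ->
    CompR (code [:: 5; (size a).+1; size f; e1; e2]) (m.+1 :: a) f b
          (osup2 (OS r1) (OS r2))
| S6i e1 i j a f b r :
    i < size a -> j < size a ->
    CompR e1 (swap_seq 0 a i j) f b r ->
    CompR (code [:: 6; size a; size f; e1; i; j; 0]) a f b (OS r)
| S6f e1 i j a f b r :
    i < size f -> j < size f ->
    CompR e1 a (swap_seq (fun _ => 0) f i j) b r ->
    CompR (code [:: 6; size a; size f; e1; i; j; 1]) a f b (OS r)
| S7 x a g f : CompR (code [:: 7; (size a).+1; (size f).+1]) (x :: a) (g :: f) (g x) OZ
| S8 e1 a f (g : fn) (h : nat -> Ord) b :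
    (forall x, CompR e1 (x :: a) f (g x) (h x)) -> S_val g b ->
    CompR (code [:: 8; size a; size f; e1]) a f b (OL (fun x => OS (h x)))
| S9 d a f b r :
    CompR d a f b r ->
    CompR (code [:: 9; (size a).+1; size f]) (d :: a) f b (OS r).

Definition rank_lt (e : nat) (a : seq nat) (f : seq fn) (b : nat) (alpha : Ord) : Prop :=
  exists r, CompR e a f b r /\ olt r alpha.

Definition pt (k : nat) := 'I_k -> nat -> nat.

Definition open_set (k : nat) (U : pt k -> Prop) : Prop :=
  forall x, U x -> exists m, forall y : pt k,
      (forall (i : 'I_k) n, n < m -> y i n = x i n) -> U y.

Definition clopen (k : nat) (U : pt k -> Prop) : Prop :=
  open_set U /\ open_set (fun x => ~ U x).

Definition suslinA (k : nat) (P : seq nat -> pt k -> Prop) (x : pt k) : Prop :=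
  exists f : nat -> nat, forall n, P (mkseq f n) x.

Inductive Sigma (k : nat) : Ord -> (pt k -> Prop) -> Prop :=
| Sigma0 b A : ole b OZ -> clopen A -> Sigma b A
| SigmaA b A (P : seq nat -> pt k -> Prop) :
    olt OZ b ->
    (forall x, A x <-> suslinA P x) ->
    (forall s, exists g, olt g b /\
        exists B, Sigma g B /\ forall x, P s x <-> ~ B x) ->
    Sigma b A.

Definition Pi (k : nat) (b : Ord) (A : pt k -> Prop) : Prop :=
  exists B, Sigma b B /\ forall x, A x <-> ~ B x.

Definition Suslin (k : nat) (A : pt k -> Prop) : Prop := exists b, Sigma b A.

(* The proof is by induction on alpha, for all indices, integer arguments,
   values, and all lists of coordinates of the point at once (the scheme S6
   permutes function arguments).  A computation of
   rank below alpha + 1 is one application of a scheme S1-S9 to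
   computations of rank below alpha ([rank_below_OS]); each scheme turns
   Suslin conditions into Suslin conditions ([uniform_step]), S7 reading one
   coordinate value and S8 using that the Suslin functional is decided by a
   Suslin operation on the (single-valued) subcomputations.  Limit ranks give
   countable unions. *)

From mathcomp Require Import all_boot.
From Stdlib Require Import Classical ClassicalEpsilon.
Set Implicit Arguments. Unset Strict Implicit. Unset Printing Implicit Defensive.

(** * Ordinal bookkeeping *)

Lemma ole_OL f n a : ole a (f n) -> ole a (OL f).
Proof.
elim: a => [|a _|g IH] H; first exact: oleZ.
- by inversion H; subst; apply/oleS/(@oltL _ _ n).
- inversion H; subst; apply: oleL => m; exact: IH.
Qed.

Lemma ole_refl a : ole a a.
Proof.
elim: a => [|a IH|f IH]; first exact: oleZ.
- exact/oleS/oltS.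
- by apply: oleL => n; apply: (@ole_OL _ n).
Qed.

Lemma ole_OSP r b : ole (OS r) b <-> olt r b.
Proof. by split=> [H|]; [inversion H | exact: oleS]. Qed.

Lemma ole_OLP f b : ole (OL f) b <-> forall n, ole (f n) b.
Proof. by split=> [H|]; [inversion H | exact: oleL]. Qed.

Lemma ole_sup2P r1 r2 b : ole (osup2 (OS r1) (OS r2)) b <-> olt r1 b /\ olt r2 b.
Proof.
rewrite ole_OLP; split=> [H|[H1 H2] [|n]]; [|by apply/ole_OSP..].
by split; apply/ole_OSP; [exact: (H 0) | exact: (H 1)].
Qed.

(** * Closure properties of Suslin sets *)

Definition coSuslin k (A : pt k -> Prop) : Prop :=
  exists B, Suslin B /\ forall x, A x <-> ~ B x.

(* The Suslin operation applied to complements of Suslin sets yields a Suslin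
   set: the countably many ranks involved are bounded by their supremum. *)
Lemma Suslin_of_scheme k (A : pt k -> Prop) (P : seq nat -> pt k -> Prop) :
  (forall s, coSuslin (P s)) -> (forall x, A x <-> suslinA P x) -> Suslin A.
Proof.
move=> HP HA.
have /choice [G HG] : forall s, exists g, exists B,
    Sigma g B /\ forall x, P s x <-> ~ B x.
  by move=> s; have [B [[g Hg] HB]] := HP s; exists g, B.
pose M := OL (fun n => if (unpickle n : option (seq nat)) is Some s then G s else OZ).
exists (OS M); apply: (SigmaA _ HA); first exact/oltS/oleZ.
move=> s; exists (G s); split; last exact: HG.
by apply/oltS/(@ole_OL _ (pickle s)); rewrite pickleK; exact: ole_refl.
Qed.

Lemma suslinA_const k (B : pt k -> Prop) x : suslinA (fun _ => B) x <-> B x.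
Proof. by split=> [[f /(_ 0)] | Bx] //; exists (fun _ => 0). Qed.

(* Every Suslin set arises from a scheme of complements of Suslin sets; a
   clopen set is the Suslin operation applied to its own constant scheme. *)
Lemma scheme_of_Suslin k (A : pt k -> Prop) : Suslin A ->
  exists P, (forall s, coSuslin (P s)) /\ forall x, A x <-> suslinA P x.
Proof.
case=> _ [b {}A _ [openA openCA] | b {}A P _ HA HP].
- exists (fun _ => A); split=> [s|x]; last by rewrite suslinA_const.
  exists (fun x => ~ A x); split=> [|x]; last by split=> [Ax /(_ Ax)|/NNPP].
  exists OZ; apply: Sigma0; first exact: oleZ.
  split=> // x /NNPP Ax; have [m Hm] := openA x Ax.
  by exists m => y /Hm Ay /(_ Ay).
- exists P; split=> // s; have [g [_ [B [HB HPB]]]] := HP s.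
  by exists B; split=> //; exists g.
Qed.

Lemma Suslin_ext k (A A' : pt k -> Prop) :
  (forall x, A x <-> A' x) -> Suslin A -> Suslin A'.
Proof.
move=> HAA /scheme_of_Suslin [P [HP HA]]; apply: (Suslin_of_scheme HP) => x.
by rewrite -HA -HAA.
Qed.

(* A set that is either empty or everything is clopen, hence Suslin. *)
Lemma Suslin_invariant k (C : pt k -> Prop) : (forall x y, C x -> C y) -> Suslin C.
Proof.
move=> HC; exists OZ; apply: Sigma0; first exact: oleZ.
by split=> x Cx; exists 0 => y _; [exact: HC Cx | move=> Cy; exact/Cx/(HC y)].
Qed.

(* Complements: the Suslin operation on the constant scheme [~ A]. *)
Lemma Suslin_not k (A : pt k -> Prop) : Suslin A -> Suslin (fun x => ~ A x).
Proof.
move=> SA; apply: (@Suslin_of_scheme _ _ (fun _ x => ~ A x)) => [s|x].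
- by exists A; split.
- by rewrite suslinA_const.
Qed.

Lemma coSuslin_of_Suslin k (A : pt k -> Prop) : Suslin A -> coSuslin A.
Proof.
move=> SA; exists (fun x => ~ A x); split; first exact: Suslin_not.
by move=> x; split=> [Ax /(_ Ax)|/NNPP].
Qed.

Lemma Suslin_suslinA k (P : seq nat -> pt k -> Prop) :
  (forall s, Suslin (P s)) -> Suslin (suslinA P).
Proof. by move=> SP; apply: (@Suslin_of_scheme _ _ P) => // s; exact: coSuslin_of_Suslin. Qed.

Lemma mkseq_shift (f : nat -> nat) n : mkseq f n.+1 = f 0 :: mkseq (fun i => f i.+1) n.
Proof. by rewrite /mkseq /= -[1]/(1 + 0) iotaDl -map_comp. Qed.

(* Countable unions: prefix the branch index to the schemes of the pieces. *)
Lemma Suslin_ex_nat k (A : nat -> pt k -> Prop) :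
  (forall n, Suslin (A n)) -> Suslin (fun x => exists n, A n x).
Proof.
move=> SA; have /choice [P HP] := fun n => scheme_of_Suslin (SA n).
pose Q s := if s is n :: s' then P n s' else (fun _ : pt k => True).
apply: (@Suslin_of_scheme _ _ Q) => [[|n s]|x].
- by rewrite /Q; exists (fun _ => False); split=> [|x]; [apply: Suslin_invariant | tauto].
- exact: (HP n).1.
split=> [[n /(HP n).2 [f Hf]] | [f Hf]].
- by exists (fun i => if i is i'.+1 then f i' else n) => -[|m] //; rewrite mkseq_shift.
- exists (f 0); apply/(HP (f 0)).2; exists (fun i => f i.+1) => m.
  by have := Hf m.+1; rewrite mkseq_shift.
Qed.

(* Countable intersections, by De Morgan. *)
Lemma Suslin_all_nat k (A : nat -> pt k -> Prop) :
  (forall n, Suslin (A n)) -> Suslin (fun x => forall n, A n x).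
Proof.
move=> SA; apply: (@Suslin_ext _ (fun x => ~ exists n, ~ A n x)).
  by move=> x; split=> [H n | H [n]]; [apply: NNPP => nA; apply: H; exists n | apply].
by apply/Suslin_not/Suslin_ex_nat => n; exact/Suslin_not.
Qed.

Lemma Suslin_or k (A B : pt k -> Prop) :
  Suslin A -> Suslin B -> Suslin (fun x => A x \/ B x).
Proof.
move=> SA SB; apply: (@Suslin_ext _ (fun x => exists n, if n is 0 then A x else B x)).
  by move=> x; split=> [[[|n] H] | [H|H]]; [left | right | exists 0 | exists 1].
by apply: Suslin_ex_nat => -[|n].
Qed.

Lemma Suslin_and k (A B : pt k -> Prop) :
  Suslin A -> Suslin B -> Suslin (fun x => A x /\ B x).
Proof.
move=> SA SB; apply: (@Suslin_ext _ (fun x => forall n, if n is 0 then A x else B x)).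
  by move=> x; split=> [H | [H1 H2] [|n]] //; split; [exact: (H 0) | exact: (H 1)].
by apply: Suslin_all_nat => -[|n].
Qed.

Lemma Suslin_ex_count k (T : countType) (A : T -> pt k -> Prop) :
  (forall t, Suslin (A t)) -> Suslin (fun x => exists t, A t x).
Proof.
move=> SA; apply: (@Suslin_ext _
    (fun x => exists n, if (unpickle n : option T) is Some t then A t x else False)).
  move=> x; split=> [[n] | [t At]]; last by exists (pickle t); rewrite pickleK.
  by case: (unpickle n) => // t At; exists t.
by apply: Suslin_ex_nat => n; case: (unpickle n) => [t|]; [exact: SA | apply: Suslin_invariant].
Qed.

Lemma Suslin_coord k (i : 'I_k) x b : Suslin (fun fs : pt k => fs i x = b).
Proof.
exists OZ; apply: Sigma0; first exact: oleZ.
by split=> fs H; exists x.+1 => y Hy; rewrite Hy.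
Qed.

(** * Single-valuedness of computations *)

(* The coding of finite sequences is injective, so distinct schemes have
   distinct indices. *)
Lemma pairn_inj x y x' y' : pairn x y = pairn x' y' -> x = x' /\ y = y'.
Proof.
rewrite /pairn; elim: x x' => [|x IH] [|x'] /=; rewrite ?expn0 ?mul1n ?expnS -?mulnA.
- by case=> /eqP; rewrite eqn_pmul2l // => /eqP ->.
- by move/(congr1 odd); rewrite /= !oddM.
- by move/(congr1 odd); rewrite /= !oddM.
- by move/eqP; rewrite eqn_pmul2l // => /eqP /IH [-> ->].
Qed.

Lemma code_inj : injective code.
Proof.
have pairn_gt0 x y : 0 < pairn x y by rewrite /pairn muln_gt0 expn_gt0.
elim=> [|x s IH] [|y t] //= => [E|E|/pairn_inj [-> /IH ->] //].
- by have := pairn_gt0 y (code t); rewrite -E.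
- by have := pairn_gt0 x (code s); rewrite E.
Qed.

Lemma S_val_unique g g' b b' : g =1 g' -> S_val g b -> S_val g' b' -> b = b'.
Proof.
move=> Eg [[-> H0]|[-> [f Hf]]] [[-> H0']|[-> [f' Hf']]] //.
- by have [n] := H0 f'; have := Hf' n; rewrite -Eg => /[swap] ->.
- by have [n] := H0' f; have := Hf n; rewrite Eg => /[swap] ->.
Qed.

(* S(g) = b for a total selection g of a single-valued relation G, expressed
   through G alone: G is total, and b records whether some path h avoids the
   zeros of G on the codes of its initial segments. *)
Lemma S_val_graph (G : nat -> nat -> Prop) b :
  (forall x y y', G x y -> G x y' -> y = y') ->
  (exists g, (forall x, G x (g x)) /\ S_val g b) <->
  (forall x, exists y, G x y) /\
  ((b = 0 /\ ~ exists h, forall n, ~ G (fbar h n) 0) \/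
   (b = 1 /\ exists h, forall n, ~ G (fbar h n) 0)).
Proof.
move=> G_single; split.
- case=> g [Gg HS]; split=> [x|]; first by exists (g x).
  case: HS => [[-> H0]|[-> [h Hh]]]; [left | right]; split=> //.
  + case=> h Hh; have [n Hn] := H0 h.
    by apply: (Hh n); rewrite -Hn.
  + exists h => n /(G_single _ _ _ (Gg _)) E.
    by have := Hh n; rewrite E.
- case=> /choice [g Gg] Hb; exists g; split=> //.
  case: Hb => [[-> Hn]|[-> [h Hh]]]; [left | right]; split=> //.
  + move=> h; apply: NNPP => Hno; apply: Hn; exists h => n Gh0.
    by apply: Hno; exists n; exact: G_single (Gg _) Gh0.
  + exists h => n; rewrite lt0n; apply/eqP => E.
    by apply: (Hh n); rewrite -E.
Qed.

(* The value of a computation is determined by the index and the arguments;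
   the indices of distinct schemes differ since [code] is injective. *)
Lemma CompR_functional e a f b r : CompR e a f b r ->
  forall e' a' f' b' r', CompR e' a' f' b' r' -> e = e' -> a = a' -> f = f' -> b = b'.
Proof.
elim=> {e a f b r}
  [x a f | q a f | x a f
  | e1 e2 a f c b r1 r2 _ IH2 _ IH1
  | e1 e2 a f b r1 _ IH1
  | e1 e2 m a f c b r1 r2 _ IH1 _ IH2
  | e1 i j a f b r _ _ _ IH1
  | e1 i j a f b r _ _ _ IH1
  | x a g f
  | e1 a f g h b _ IH1 HS
  | d a f b r _ IH1] e0 a0 f0 b0 r0;
case=>
  [x' a' f' | q' a' f' | x' a' f'
  | e1' e2' a' f' c' b' r1' r2' H2' H1'
  | e1' e2' a' f' b' r1' H1'
  | e1' e2' m' a' f' c' b' r1' r2' H1' H2'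
  | e1' i' j' a' f' b' r' _ _ H1'
  | e1' i' j' a' f' b' r' _ _ H1'
  | x' a' g' f'
  | e1' a' f' g' h' b' H1' HS'
  | d' a' f' b' r' H1'] /code_inj He Ha Hf; try discriminate He;
  try (injection Ha; intros; subst; discriminate).
all: injection He; intros; subst; try (injection Ha; intros; subst);
  try (injection Hf; intros; subst); try done.
- by have Ec := IH2 _ _ _ _ _ H2' erefl erefl erefl; subst; apply: (IH1 _ _ _ _ _ H1').
- by apply: (IH1 _ _ _ _ _ H1').
- by have Ec := IH1 _ _ _ _ _ H1' erefl erefl erefl; subst; apply: (IH2 _ _ _ _ _ H2').
- by apply: (IH1 _ _ _ _ _ H1').
- by apply: (IH1 _ _ _ _ _ H1').
- by apply: S_val_unique HS HS' => x; apply: (IH1 x _ _ _ _ _ (H1' x)).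
- by apply: (IH1 _ _ _ _ _ H1').
Qed.

Lemma CompR_det e a f b b' r r' : CompR e a f b r -> CompR e a f b' r' -> b = b'.
Proof. by move=> H H'; exact: CompR_functional H _ _ _ _ _ H' erefl erefl erefl. Qed.

(** * One step of the computation relation *)

Definition comp_rel := nat -> seq nat -> seq fn -> nat -> Prop.

Definition rank_below (beta : Ord) : comp_rel := fun e a F b => rank_lt e a F b beta.

(* The clauses of the schemes S1-S9, each read as a condition on a tuple
   given a relation [R] describing the allowed immediate subcomputations. *)
Definition sch_succ : comp_rel := fun e a F b =>
  exists x a0, a = x :: a0 /\ e = code [:: 1; (size a0).+1; size F] /\ b = x.+1.
Definition sch_const : comp_rel := fun e a F b => e = code [:: 2; size a; size F; b].
Definition sch_proj : comp_rel := fun e a F b =>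
  exists a0, a = b :: a0 /\ e = code [:: 3; (size a0).+1; size F].
Definition sch_comp (R : comp_rel) : comp_rel := fun e a F b =>
  exists e1 e2 c, e = code [:: 4; size a; size F; e1; e2] /\ R e2 a F c /\ R e1 (c :: a) F b.
Definition sch_rec0 (R : comp_rel) : comp_rel := fun e a F b =>
  exists e1 e2 a0, a = 0 :: a0 /\ e = code [:: 5; (size a0).+1; size F; e1; e2] /\
    R e1 a0 F b.
(* The recursive call of [sch_recS] reuses the index [e] itself. *)
Definition sch_recS (R : comp_rel) : comp_rel := fun e a F b =>
  exists e1 e2 m a0 c, a = m.+1 :: a0 /\ e = code [:: 5; (size a0).+1; size F; e1; e2] /\
    R e (m :: a0) F c /\ R e2 (c :: m :: a0) F b.
Definition sch_perm_int (R : comp_rel) : comp_rel := fun e a F b =>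
  exists e1 i j, i < size a /\ j < size a /\
    e = code [:: 6; size a; size F; e1; i; j; 0] /\ R e1 (swap_seq 0 a i j) F b.
Definition sch_perm_fun (R : comp_rel) : comp_rel := fun e a F b =>
  exists e1 i j, i < size F /\ j < size F /\
    e = code [:: 6; size a; size F; e1; i; j; 1] /\ R e1 a (swap_seq (fun _ => 0) F i j) b.
Definition sch_app : comp_rel := fun e a F b =>
  exists x a0 g F0, a = x :: a0 /\ F = g :: F0 /\
    e = code [:: 7; (size a0).+1; (size F0).+1] /\ b = g x.
Definition sch_suslin (R : comp_rel) : comp_rel := fun e a F b =>
  exists e1 g, e = code [:: 8; size a; size F; e1] /\
    (forall x, R e1 (x :: a) F (g x)) /\ S_val g b.
Definition sch_enum (R : comp_rel) : comp_rel := fun e a F b =>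
  exists d a0, a = d :: a0 /\ e = code [:: 9; (size a0).+1; size F] /\ R d a0 F b.

Definition step (R : comp_rel) : comp_rel := fun e a F b =>
  sch_succ e a F b \/ sch_const e a F b \/ sch_proj e a F b \/ sch_comp R e a F b \/
  sch_rec0 R e a F b \/ sch_recS R e a F b \/ sch_perm_int R e a F b \/
  sch_perm_fun R e a F b \/ sch_app e a F b \/ sch_suslin R e a F b \/ sch_enum R e a F b.

Lemma rank_lt_OSP e a F b beta :
  rank_lt e a F b (OS beta) <-> exists r, CompR e a F b r /\ ole r beta.
Proof.
split=> [[r [H Hlt]]|[r [H Hle]]]; exists r; split=> //; last exact: oltS.
by inversion Hlt.
Qed.

Lemma step_of_rank_below_OS beta e a F b :
  rank_below (OS beta) e a F b -> step (rank_below beta) e a F b.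
Proof.
rewrite /rank_below rank_lt_OSP.
case=> r [H]; case: H => {e a F b r}
  [x a F | q a F | x a F
  | e1 e2 a F c b r1 r2 H2 H1
  | e1 e2 a F b r1 H1
  | e1 e2 m a F c b r1 r2 H1 H2
  | e1 i j a F b r Hi Hj H1
  | e1 i j a F b r Hi Hj H1
  | x a g F
  | e1 a F g h b H1 HS
  | d a F b r H1];
  rewrite ?ole_sup2P ?ole_OSP ?ole_OLP.
- by left; exists x, a.
- by right; left.
- by do 2 right; left; exists a.
- by case=> L1 L2; do 3 right; left; exists e1, e2, c; split=> //; split; [exists r2 | exists r1].
- by move=> L1; do 4 right; left; exists e1, e2, a; do 2 split=> //; exists r1.
- case=> L1 L2; do 5 right; left; exists e1, e2, m, a, c; do 2 split=> //.
  by split; [exists r1 | exists r2].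
- by move=> L1; do 6 right; left; exists e1, i, j; do 3 split=> //; exists r.
- by move=> L1; do 7 right; left; exists e1, i, j; do 3 split=> //; exists r.
- by do 8 right; left; exists x, a, g, F.
- move=> L; do 9 right; left; exists e1, g; split=> //; split=> // x.
  by exists (h x); split; last exact/ole_OSP/L.
- by move=> L1; do 10 right; exists d, a; do 2 split=> //; exists r.
Qed.

Lemma rank_below_OS_of_step beta e a F b :
  step (rank_below beta) e a F b -> rank_below (OS beta) e a F b.
Proof.
rewrite /rank_below rank_lt_OSP.
case=> [[x [a0 [-> [-> ->]]]]|].
  by exists OZ; split; [exact: S1 | exact: oleZ].
case=> [->|].
  by exists OZ; split; [exact: S2 | exact: oleZ].
case=> [[a0 [-> ->]]|].
  by exists OZ; split; [exact: S3 | exact: oleZ].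
case=> [[e1 [e2 [c [-> [[r2 [H2 L2]] [r1 [H1 L1]]]]]]]|].
  by exists (osup2 (OS r1) (OS r2)); split; [exact: S4 H2 H1 | exact/ole_sup2P].
case=> [[e1 [e2 [a0 [-> [-> [r1 [H1 L1]]]]]]]|].
  by exists (OS r1); split; [exact: S5z | exact/ole_OSP].
case=> [[e1 [e2 [m [a0 [c [-> [-> [[r1 [H1 L1]] [r2 [H2 L2]]]]]]]]]]|].
  by exists (osup2 (OS r1) (OS r2)); split; [exact: S5s H1 H2 | exact/ole_sup2P].
case=> [[e1 [i [j [Hi [Hj [-> [r [H1 L1]]]]]]]]|].
  by exists (OS r); split; [exact: S6i | exact/ole_OSP].
case=> [[e1 [i [j [Hi [Hj [-> [r [H1 L1]]]]]]]]|].
  by exists (OS r); split; [exact: S6f | exact/ole_OSP].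
case=> [[x [a0 [g [F0 [-> [-> [-> ->]]]]]]]|].
  by exists OZ; split; [exact: S7 | exact: oleZ].
case=> [[e1 [g [-> [/choice [h Hh] HS]]]]|].
  exists (OL (fun x => OS (h x))); split; first by apply: S8 HS => x; exact: (Hh x).1.
  by apply/ole_OLP => x; apply/ole_OSP; exact: (Hh x).2.
case=> [d [a0 [-> [-> [r [H1 L1]]]]]].
by exists (OS r); split; [exact: S9 | exact/ole_OSP].
Qed.

Lemma rank_below_OS beta e a F b :
  rank_below (OS beta) e a F b <-> step (rank_below beta) e a F b.
Proof. by split; [exact: step_of_rank_below_OS | exact: rank_below_OS_of_step]. Qed.

(** * Suslin-definability is preserved by one step *)

(* Arbitrary lists of
   coordinates are needed because scheme S6 permutes the function arguments. *)
Definition uniformly_Suslin k (R : comp_rel) : Prop :=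
  forall e a b (l : seq 'I_k), Suslin (fun fs : pt k => R e a (map fs l) b).

Definition single_valued (R : comp_rel) : Prop :=
  forall e a F b b', R e a F b -> R e a F b' -> b = b'.

Lemma uniform_size_only k (R : comp_rel) :
  (forall e a F F' b, size F = size F' -> R e a F b -> R e a F' b) -> uniformly_Suslin k R.
Proof. by move=> HR e a b l; apply: Suslin_invariant => x y; apply: HR; rewrite !size_map. Qed.

(* Side conditions on the index and the integer arguments only depend on
   the point through the number of listed coordinates. *)
Ltac Suslin_guard :=
  apply: Suslin_and; first by apply: Suslin_invariant => ? ?; rewrite ?size_map.

Lemma uniform_succ k : uniformly_Suslin k sch_succ.
Proof.
apply: uniform_size_only => e a F F' b EF [x [a0 [-> [-> ->]]]].
by exists x, a0; rewrite EF.
Qed.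

Lemma uniform_const k : uniformly_Suslin k sch_const.
Proof. by apply: uniform_size_only => e a F F' b EF; rewrite /sch_const EF. Qed.

Lemma uniform_proj k : uniformly_Suslin k sch_proj.
Proof. by apply: uniform_size_only => e a F F' b EF [a0 [-> ->]]; exists a0; rewrite EF. Qed.

Lemma swap_seq_map (T : Type) (fs : T -> fn) d (l : seq T) i j :
  i < size l -> j < size l ->
  swap_seq (fun _ => 0) (map fs l) i j = map fs (swap_seq d l i j).
Proof.
move=> Hi Hj; rewrite /swap_seq size_map -map_comp; apply/eq_in_map => n.
rewrite mem_iota add0n => /andP [_ Hn] /=; rewrite (nth_map d) //.
by case: (n == i) => //; case: (n == j).
Qed.

Section OneStepSuslin.

Variables (k : nat) (R : comp_rel).
Hypothesis R_Suslin : uniformly_Suslin k R.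

(* Schemes S4, S5, S6 and S9: countable unions over the hidden indices and
   intermediate values of conditions on finitely many subcomputations. *)
Lemma uniform_comp : uniformly_Suslin k (sch_comp R).
Proof.
move=> e a b l; do 3 apply: Suslin_ex_nat => ?.
by Suslin_guard; apply: Suslin_and; apply: R_Suslin.
Qed.

Lemma uniform_rec0 : uniformly_Suslin k (sch_rec0 R).
Proof.
move=> e a b l; do 2 apply: Suslin_ex_nat => ?; apply: Suslin_ex_count => a0.
by do 2 Suslin_guard; apply: R_Suslin.
Qed.

Lemma uniform_recS : uniformly_Suslin k (sch_recS R).
Proof.
move=> e a b l; do 3 apply: Suslin_ex_nat => ?; apply: Suslin_ex_count => a0.
apply: Suslin_ex_nat => c.
by do 2 Suslin_guard; apply: Suslin_and; apply: R_Suslin.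
Qed.

Lemma uniform_perm_int : uniformly_Suslin k (sch_perm_int R).
Proof.
move=> e a b l; do 3 apply: Suslin_ex_nat => ?.
by do 3 Suslin_guard; apply: R_Suslin.
Qed.

(* S6 on function arguments: permuting the evaluated coordinates is the same
   as evaluating the permuted list of coordinates. *)
Lemma uniform_perm_fun : uniformly_Suslin k (sch_perm_fun R).
Proof.
move=> e a b [|d l].
  by apply: Suslin_invariant => x y [? [i [? []]]].
apply: (@Suslin_ext _ (fun fs : pt k => exists e1 i j,
    i < size (d :: l) /\ j < size (d :: l) /\
    e = code [:: 6; size a; size (d :: l); e1; i; j; 1] /\
    R e1 a (map fs (swap_seq d (d :: l) i j)) b)).
  move=> fs; rewrite /sch_perm_fun size_map.
  split=> -[e1 [i [j [Hi [Hj [He H]]]]]]; exists e1, i, j; do 3 split=> //.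
  - by rewrite (swap_seq_map _ d).
  - by rewrite -(swap_seq_map _ d).
do 3 apply: Suslin_ex_nat => ?.
by do 3 Suslin_guard; apply: R_Suslin.
Qed.

(* Application S7 reads one value of the first listed coordinate. *)
Lemma uniform_app : uniformly_Suslin k sch_app.
Proof.
move=> e a b [|i0 l].
  by apply: Suslin_invariant => x y [? [? [? [? [_ []]]]]].
apply: (@Suslin_ext _ (fun fs : pt k => exists x a0, a = x :: a0 /\
    e = code [:: 7; (size a0).+1; (size l).+1] /\ fs i0 x = b)).
  move=> fs; split.
  - by case=> x [a0 [-> [-> <-]]]; exists x, a0, (fs i0), (map fs l); rewrite size_map.
  - by case=> x [a0 [g [F0 [-> [[<- <-] [-> ->]]]]]]; exists x, a0; rewrite size_map.
apply: Suslin_ex_nat => x; apply: Suslin_ex_count => a0.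
by do 2 Suslin_guard; apply: Suslin_coord.
Qed.

Lemma uniform_enum : uniformly_Suslin k (sch_enum R).
Proof.
move=> e a b l; apply: Suslin_ex_nat => d; apply: Suslin_ex_count => a0.
by do 2 Suslin_guard; apply: R_Suslin.
Qed.

Hypothesis R_single : single_valued R.

(* S8: the totality condition is a countable intersection of countable unions,
   and the value of S is decided by a Suslin operation or its complement. *)
Lemma uniform_suslin : uniformly_Suslin k (sch_suslin R).
Proof.
move=> e a b l; apply: Suslin_ex_nat => e1.
pose P s (fs : pt k) := ~ R e1 (code s :: a) (map fs l) 0.
apply: (@Suslin_ext _ (fun fs : pt k => e = code [:: 8; size a; size (map fs l); e1] /\
    (forall x, exists y, R e1 (x :: a) (map fs l) y) /\
    (b = 0 /\ ~ suslinA P fs \/ b = 1 /\ suslinA P fs))).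
  move=> fs; have GP := S_val_graph b (fun x => @R_single e1 (x :: a) (map fs l)).
  split=> [[-> /GP [g Hg]] | [g [-> Hg]]]; first by exists g.
  by split=> //; apply/GP; exists g.
Suslin_guard; apply: Suslin_and.
  by apply: Suslin_all_nat => x; apply: Suslin_ex_nat => y; apply: R_Suslin.
have SP : forall s, Suslin (P s) by move=> s; apply/Suslin_not/R_Suslin.
apply: Suslin_or; Suslin_guard; last exact: Suslin_suslinA.
exact/Suslin_not/Suslin_suslinA.
Qed.

Lemma uniform_step : uniformly_Suslin k (step R).
Proof.
move=> e a b l; rewrite /step.
apply: Suslin_or; first exact: uniform_succ.
apply: Suslin_or; first exact: uniform_const.
apply: Suslin_or; first exact: uniform_proj.
apply: Suslin_or; first exact: uniform_comp.
apply: Suslin_or; first exact: uniform_rec0.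
apply: Suslin_or; first exact: uniform_recS.
apply: Suslin_or; first exact: uniform_perm_int.
apply: Suslin_or; first exact: uniform_perm_fun.
apply: Suslin_or; first exact: uniform_app.
apply: Suslin_or; first exact: uniform_suslin.
exact: uniform_enum.
Qed.

End OneStepSuslin.

Lemma rank_below_single beta : single_valued (rank_below beta).
Proof. by move=> e a F b b' [r [H _]] [r' [H' _]]; exact: CompR_det H H'. Qed.

Lemma rank_below_OL f e a F b :
  rank_below (OL f) e a F b <-> exists n, rank_below (f n) e a F b.
Proof.
split=> [[r [H Hlt]] | [n [r [H Hlt]]]]; last by exists r; split=> //; exact: oltL Hlt.
by inversion Hlt; subst; exists n, r.
Qed.

(* By induction on [beta]: nothing has rank below 0, rank below [beta + 1]
   is one step over rank below [beta], and rank below a limit is a countable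
   union. *)
Lemma uniform_rank_below k beta : uniformly_Suslin k (rank_below beta).
Proof.
elim: beta => [|beta IH|f IH] e a b l.
- by apply: Suslin_invariant => x y [r [_ Hlt]]; inversion Hlt.
- apply: Suslin_ext (uniform_step IH (@rank_below_single beta) e a b l) => fs.
  by rewrite rank_below_OS.
- apply: Suslin_ext (Suslin_ex_nat (fun n => IH n e a b l)) => fs.
  by rewrite rank_below_OL.
Qed.

Theorem theorem3p2 (alpha : Ord) (e k : nat) (a : seq nat) (b : nat) :
  Suslin (fun fs : pt k => rank_lt e a [seq fs i | i <- enum 'I_k] b alpha).
Proof. exact: uniform_rank_below. Qed.
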